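(* Every modification of $D$ performed by any stage of the Purification procedure replaces $D$ by a cirquent of strictly smaller rank.
   Context: Cirquents: $\top$, $\bot$ and literals ($p$ or $\neg p$, $p$ an elementary letter) are cirquents; if $A,B$ are cirquents then so are $A\vee B$, $A\wedge B$, $A\sqcap^cB$ ($c$ a conjunctive cluster) and $A\sqcup^cB$ ($c$ a disjunctive cluster); clusters are drawn from two disjoint infinite sets. A surface occurrence of a subcirquent or connective is one not in the scope of any choice connective $\sqcup^c,\sqcap^c$. Tetration: ${}^1a=a$, ${}^{n+1}a=a^{({}^na)}$. Rank: $\overline{C}=1$ for $\top,\bot$ and literals; $\overline{A\sqcup^cB}=\overline{A\sqcap^cB}=\overline{A}+\overline{B}$; $\overline{A\wedge B}=5^{\overline{A}+\overline{B}}$; $\overline{A\vee B}={}^{(\overline{A}+\overline{B})}5$. Purification procedure applied to a cirquent $D$: Stages 1 through 7 are executed in order; each stage is a loop iterated until it no longer modifies the current $D$, after which the next stage begins (after Stage 7 the current $D$ is returned). Stage 1: if $D$ has a surface occurrence of $\bot\vee A$ or $A\vee\bot$, change it to $A$; next, if $D$ has a surface occurrence of $\bot\wedge A$ or $A\wedge\bot$, change it to $\bot$. Stage 2: a surface occurrence of $(A\wedge B)\vee C$ or $C\vee(A\wedge B)$ is changed to $(A\vee C)\wedge(B\vee C)$. Stage 3: a surface occurrence of $(A\sqcap^cB)\vee C$ or $C\vee(A\sqcap^cB)$ is changed to $(A\vee C)\sqcap^c(B\vee C)$. Stage 4: a surface occurrence of $A_1\vee\dots\vee A_n$ (any bracketing)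 such that for some letter $p$ both $p$ and $\neg p$ are among $A_1,\dots,A_n$ is changed to $\top$. Stage 5: a surface occurrence of $\top\vee A$ or $A\vee\top$ is changed to $\top$; next, a surface occurrence of $\top\wedge A$ or $A\wedge\top$ is changed to $A$. Stage 6: a surface occurrence of $(A\sqcap^aB)\wedge(E\sqcap^bF)$ is changed to $\big((A\wedge(E\sqcap^bF))\sqcap^a(B\wedge(E\sqcap^bF))\big)\sqcap^c\big(((A\sqcap^aB)\wedge E)\sqcap^b((A\sqcap^aB)\wedge F)\big)$, where $c$ is a conjunctive cluster not occurring in $D$. Stage 7: if $D$ is of the form $X[E\sqcap^cF]\sqcap^cA$ (resp. $A\sqcap^cX[E\sqcap^cF]$), change it to $X[E]\sqcap^cA$ (resp. $A\sqcap^cX[F]$), where $X[E\sqcap^cF]$ denotes a cirquent containing the subcirquent $E\sqcap^cF$ and $X[E]$ the result of replacing it by $E$. *)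

From Stdlib Require List.
From mathcomp Require Import all_boot.
Set Implicit Arguments. Unset Strict Implicit. Unset Printing Implicit Defensive.

(* Elementary letters, conjunctive clusters and disjunctive clusters are all
   represented by nat; conjunctive and disjunctive clusters are kept disjoint
   because they are used by different constructors. *)
Definition letter := nat.
Definition cclust := nat.
Definition dclust := nat.

Inductive cirquent : Type :=
| CTop : cirquent
| CBot : cirquent
| CPos : letter -> cirquent
| CNeg : letter -> cirquent
| COr  : cirquent -> cirquent -> cirquent
| CAnd : cirquent -> cirquent -> cirquent
| CCand : cclust -> cirquent -> cirquent -> cirquent
| CCor  : dclust -> cirquent -> cirquent -> cirquent.

(* Tetration: ^1 a = a, ^(n+1) a = a ^ (^n a). (^0 a := 1, never used by rank
   since the height is always >= 2 there.) *)
Fixpoint tet (n a : nat) : nat :=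
  match n with
  | 0 => 1
  | 1 => a
  | n'.+1 => a ^ tet n' a
  end.

Fixpoint rank (C : cirquent) : nat :=
  match C with
  | CTop | CBot | CPos _ | CNeg _ => 1
  | CCand _ A B | CCor _ A B => rank A + rank B
  | CAnd A B => 5 ^ (rank A + rank B)
  | COr A B => tet (rank A + rank B) 5
  end.

Fixpoint occurs_cclust (c : cclust) (C : cirquent) : bool :=
  match C with
  | CTop | CBot | CPos _ | CNeg _ => false
  | COr A B | CAnd A B | CCor _ A B => occurs_cclust c A || occurs_cclust c B
  | CCand c' A B => (c' == c) || occurs_cclust c A || occurs_cclust c B
  end.

(* Surface contexts: the hole is not in the scope of any choice connective. *)
Inductive sctx : Type :=
| SHole : sctx
| SOrL  : sctx -> cirquent -> sctx
| SOrR  : cirquent -> sctx -> sctx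
| SAndL : sctx -> cirquent -> sctx
| SAndR : cirquent -> sctx -> sctx.

Fixpoint splug (K : sctx) (X : cirquent) : cirquent :=
  match K with
  | SHole => X
  | SOrL K B => COr (splug K X) B
  | SOrR A K => COr A (splug K X)
  | SAndL K B => CAnd (splug K X) B
  | SAndR A K => CAnd A (splug K X)
  end.

Inductive gctx : Type :=
| GHole : gctx
| GOrL  : gctx -> cirquent -> gctx
| GOrR  : cirquent -> gctx -> gctx
| GAndL : gctx -> cirquent -> gctx
| GAndR : cirquent -> gctx -> gctx
| GCandL : cclust -> gctx -> cirquent -> gctx
| GCandR : cclust -> cirquent -> gctx -> gctx
| GCorL : dclust -> gctx -> cirquent -> gctx
| GCorR : dclust -> cirquent -> gctx -> gctx.

Fixpoint gplug (K : gctx) (X : cirquent) : cirquent :=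
  match K with
  | GHole => X
  | GOrL K B => COr (gplug K X) B
  | GOrR A K => COr A (gplug K X)
  | GAndL K B => CAnd (gplug K X) B
  | GAndR A K => CAnd A (gplug K X)
  | GCandL c K B => CCand c (gplug K X) B
  | GCandR c A K => CCand c A (gplug K X)
  | GCorL d K B => CCor d (gplug K X) B
  | GCorR d A K => CCor d A (gplug K X)
  end.

(* disj_of E l : E is A_1 \/ ... \/ A_n, under some bracketing, with
   l = [A_1; ...; A_n]. *)
Inductive disj_of : cirquent -> seq cirquent -> Prop :=
| disj_leaf A : disj_of A [:: A]
| disj_node A B l1 l2 : disj_of A l1 -> disj_of B l2 ->
    disj_of (COr A B) (l1 ++ l2).

Inductive local_rewrite : nat -> cirquent -> cirquent -> cirquent -> Prop :=
| r1_orBl D A : local_rewrite 1 D (COr CBot A) A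
| r1_orBr D A : local_rewrite 1 D (COr A CBot) A
| r1_andBl D A : local_rewrite 1 D (CAnd CBot A) CBot
| r1_andBr D A : local_rewrite 1 D (CAnd A CBot) CBot
| r2_l D A B C : local_rewrite 2 D (COr (CAnd A B) C) (CAnd (COr A C) (COr B C))
| r2_r D A B C : local_rewrite 2 D (COr C (CAnd A B)) (CAnd (COr A C) (COr B C))
| r3_l D c A B C : local_rewrite 3 D (COr (CCand c A B) C)
                                   (CCand c (COr A C) (COr B C))
| r3_r D c A B C : local_rewrite 3 D (COr C (CCand c A B))
                                   (CCand c (COr A C) (COr B C))
| r4 D E l p : disj_of E l -> List.In (CPos p) l -> List.In (CNeg p) l ->
    local_rewrite 4 D E CTop
| r5_orTl D A : local_rewrite 5 D (COr CTop A) CTop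
| r5_orTr D A : local_rewrite 5 D (COr A CTop) CTop
| r5_andTl D A : local_rewrite 5 D (CAnd CTop A) A
| r5_andTr D A : local_rewrite 5 D (CAnd A CTop) A
| r6 D a b c A B E F : ~~ occurs_cclust c D ->
    local_rewrite 6 D (CAnd (CCand a A B) (CCand b E F))
      (CCand c
         (CCand a (CAnd A (CCand b E F)) (CAnd B (CCand b E F)))
         (CCand b (CAnd (CCand a A B) E) (CAnd (CCand a A B) F))).

Inductive purif_step : nat -> cirquent -> cirquent -> Prop :=
| step_surface i K X Y :
    local_rewrite i (splug K X) X Y ->
    purif_step i (splug K X) (splug K Y)
| step7_l c X E F A :
    purif_step 7 (CCand c (gplug X (CCand c E F)) A) (CCand c (gplug X E) A)
| step7_r c X E F A :
    purif_step 7 (CCand c A (gplug X (CCand c E F))) (CCand c A (gplug X F)).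

(* Every context is strictly monotone in its hole, so it suffices that each
   rewrite lowers the rank of the subcirquent it replaces.  Stages 1, 4, 5 and
   7 replace a cirquent by one of its proper parts (or by the atom T).  The
   other rewrites push a connective inwards, and the rank weighs choice
   connectives by a sum, conjunction by an exponential and disjunction by a
   tetration: one level of tetration absorbs the exponential it distributes
   over (Stage 2) or the doubling of a disjunct (Stage 3), and one factor 5
   absorbs the four conjuncts created by Stage 6. *)
From mathcomp Require Import all_boot zify.
Set Implicit Arguments. Unset Strict Implicit.

Section Tetration.

Variable a : nat.
Hypothesis a_gt1 : 1 < a.

Lemma tetS n : tet n.+1 a = a ^ tet n a.
Proof. by case: n. Qed.

Lemma ltn_tet n : n < tet n a.
Proof.
elim: n => [|n IH] //; rewrite tetS.
exact: leq_ltn_trans IH (ltn_expl _ a_gt1).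
Qed.

Lemma leq_tet2r m n : (tet m a <= tet n a) = (m <= n).
Proof.
have tet_ltnS k : tet k a < tet k.+1 a by rewrite tetS ltn_expl.
exact: (leq_mono (homo_ltn ltn_trans tet_ltnS)).
Qed.

Lemma ltn_tet2r m n : (tet m a < tet n a) = (m < n).
Proof. by rewrite !ltnNge leq_tet2r. Qed.

Lemma double_ltn_exp k : 2 < a -> 2 * k < a ^ k.
Proof.
move=> a_gt2; elim: k => [|k IH] //; rewrite expnS.
have : 3 * a ^ k <= a * a ^ k by rewrite leq_mul2r a_gt2 orbT.
lia.
Qed.

Lemma tet_add_lt x y n : 2 < a -> x < n -> y < n -> tet x a + tet y a < tet n a.
Proof.
case: n => // m a_gt2 x_le_m y_le_m; rewrite tetS.
apply: leq_ltn_trans (double_ltn_exp _ a_gt2); rewrite mul2n -addnn.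
by apply: leq_add; rewrite leq_tet2r.
Qed.

End Tetration.

Lemma exp_sum_lt b n (s : seq nat) :
  size s < b -> all (fun x => x < n) s -> \sum_(x <- s) b ^ x < b ^ n.
Proof.
move=> size_lt /allP s_lt; have b_gt0 : 0 < b by apply: leq_ltn_trans size_lt.
case: n s_lt => [|m] s_lt.
  case: s size_lt s_lt => [|x s] _ s_lt; first by rewrite big_nil.
  by have := s_lt x (mem_head x s).
apply: (@leq_ltn_trans (\sum_(x <- s) b ^ m)).
  rewrite !big_seq; apply: leq_sum => x /s_lt x_le_m.
  exact: (@leq_pexp2l b x m b_gt0 x_le_m).
by rewrite big_const_seq count_predT iter_addn_0 mulnC expnS ltn_pmul2r // expn_gt0 b_gt0.
Qed.

Lemma rank_gt0 C : 0 < rank C.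
Proof.
elim: C => //= [A _ B _|A _ B _|_ A IHA B _|_ A IHA B _]; rewrite ?expn_gt0 ?addn_gt0 ?IHA //.
exact: leq_ltn_trans (ltn_tet _ _).
Qed.

Lemma rank_lt_COrl A B : rank A < rank (COr A B).
Proof. exact: leq_ltn_trans (leq_addr _ _) (ltn_tet _ _). Qed.

Lemma rank_lt_COrr A B : rank B < rank (COr A B).
Proof. exact: leq_ltn_trans (leq_addl _ _) (ltn_tet _ _). Qed.

Lemma rank_lt_CAndl A B : rank A < rank (CAnd A B).
Proof. exact: leq_ltn_trans (leq_addr _ _) (ltn_expl _ _). Qed.

Lemma rank_lt_CAndr A B : rank B < rank (CAnd A B).
Proof. exact: leq_ltn_trans (leq_addl _ _) (ltn_expl _ _). Qed.

Lemma rank_lt_CCandl c A B : rank A < rank (CCand c A B).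
Proof. by rewrite /= -addn1 leq_add2l rank_gt0. Qed.

Lemma rank_lt_CCandr c A B : rank B < rank (CCand c A B).
Proof. by rewrite /= -add1n leq_add2r rank_gt0. Qed.

Lemma splug_rank_lt K X Y : rank X < rank Y -> rank (splug K X) < rank (splug K Y).
Proof.
by move=> lt_XY; elim: K => //= *; rewrite ?ltn_tet2r ?ltn_exp2l // ?ltn_add2l ?ltn_add2r.
Qed.

Lemma gplug_rank_lt K X Y : rank X < rank Y -> rank (gplug K X) < rank (gplug K Y).
Proof.
by move=> lt_XY; elim: K => //= *; rewrite ?ltn_tet2r ?ltn_exp2l // ?ltn_add2l ?ltn_add2r.
Qed.

Lemma disj_of_cases E l : disj_of E l -> l = [:: E] \/ exists A B, E = COr A B.
Proof. by case=> [A|A B l1 l2 _ _]; [left | right; exists A, B]. Qed.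

Lemma tet_distr_lt x y z : 0 < x -> 0 < y ->
  5 ^ (tet (x + z) 5 + tet (y + z) 5) < tet (5 ^ (x + y) + z) 5.
Proof.
move=> x_gt0 y_gt0; have xy_lt := ltn_expl (x + y) (isT : 1 < 5).
rewrite -[5 ^ _ + z]prednK ?addn_gt0 ?expn_gt0 // tetS ltn_exp2l //.
by apply: tet_add_lt => //; lia.
Qed.

Lemma local_rewrite_rank_lt i D X Y : local_rewrite i D X Y -> rank Y < rank X.
Proof.
case=> {i D X Y}.
- by move=> _ A; apply: rank_lt_COrr.
- by move=> _ A; apply: rank_lt_COrl.
- by move=> _ A; apply: rank_lt_CAndl.
- by move=> _ A; apply: rank_lt_CAndr.
- by move=> _ A B C /=; apply: tet_distr_lt; apply: rank_gt0.
- by move=> _ A B C /=; rewrite [rank C + _]addnC; apply: tet_distr_lt; apply: rank_gt0.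
- move=> _ c A B C /=; apply: tet_add_lt => //; have := rank_gt0 A; have := rank_gt0 B; lia.
- move=> _ c A B C /=; apply: tet_add_lt => //; have := rank_gt0 A; have := rank_gt0 B; lia.
- (* a one-element disjunction cannot contain both p and ~ p *)
  move=> _ E l p /disj_of_cases [-> [] // -> [] // []|[A [B ->]] _ _].
  exact: leq_ltn_trans (rank_gt0 A) (rank_lt_COrl A B).
- by move=> _ A; apply: rank_lt_COrl.
- by move=> _ A; apply: rank_lt_COrr.
- by move=> _ A; apply: rank_lt_CAndr.
- by move=> _ A; apply: rank_lt_CAndl.
- move=> _ a b c A B E F _ /=.
  have sum4 x1 x2 x3 x4 :
      \sum_(x <- [:: x1; x2; x3; x4]) 5 ^ x = 5 ^ x1 + 5 ^ x2 + (5 ^ x3 + 5 ^ x4).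
    by rewrite !big_cons big_nil addn0 !addnA.
  rewrite -sum4; apply: exp_sum_lt => //=.
  have := rank_gt0 A; have := rank_gt0 B; have := rank_gt0 E; have := rank_gt0 F; lia.
Qed.

Theorem lemma7p4 (i : nat) (D D' : cirquent) :
  purif_step i D D' -> rank D' < rank D.
Proof.
case=> {i D D'} [i K X Y /local_rewrite_rank_lt|c X E F A|c X E F A] /=.
- exact: splug_rank_lt.
- by rewrite ltn_add2r; apply/gplug_rank_lt/rank_lt_CCandl.
- by rewrite ltn_add2l; apply/gplug_rank_lt/rank_lt_CCandr.
Qed.
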